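(* For every positive integer $n$, $$E(n)=\sum_{d\mid n}\mu(d)\left(\left\lfloor\frac{n}{2d}\right\rfloor+1\right),$$ where $\mu$ is the Möbius function.
   Context: Define on triples of integers $\Gamma_{0,1}(\tau_1,\tau_2,\tau_3)=(\tau_2,\tau_3,\tau_2+\tau_3)$ and $\Gamma_{0,2}(\tau_1,\tau_2,\tau_3)=(\tau_1,\tau_3,\tau_1+\tau_3)$. The $(1,0)$-Euclid tree is the set of triples obtained from the root $(1,1,2)$ by finitely many (possibly zero) applications of $\Gamma_{0,1},\Gamma_{0,2}$. Define $E(1)=1$ and, for $n\ge2$, $E(n)$ as the number of distinct triples $T$ on the $(1,0)$-Euclid tree whose largest entry equals $n$. *)

From HB Require Import structures.
From mathcomp Require Import all_boot all_order all_algebra.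
Set Implicit Arguments. Unset Strict Implicit. Unset Printing Implicit Defensive.
Import Order.TTheory GRing.Theory Num.Theory.

(* Triples (tau1, tau2, tau3) of naturals: every triple on
   the (1,0)-Euclid tree has positive entries, so nat is no restriction. *)
Definition triple := (nat * nat * nat)%type.

Definition Gamma01 (t : triple) : triple :=
  let: (t1, t2, t3) := t in (t2, t3, t2 + t3).
Definition Gamma02 (t : triple) : triple :=
  let: (t1, t2, t3) := t in (t1, t3, t1 + t3).

Inductive on_euclid_tree : triple -> Prop :=
  | et_root : on_euclid_tree (1, 1, 2)
  | et_g1 t : on_euclid_tree t -> on_euclid_tree (Gamma01 t)
  | et_g2 t : on_euclid_tree t -> on_euclid_tree (Gamma02 t).

Definition largest (t : triple) : nat :=
  let: (t1, t2, t3) := t in maxn t1 (maxn t2 t3).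

Definition E_is (n k : nat) : Prop :=
  if n == 1%N then k = 1%N
  else exists s : seq triple,
      [/\ uniq s,
          (forall t, t \in s <-> on_euclid_tree t /\ largest t = n)
        & size s = k].

Definition mobius (d : nat) : int :=
  if (0 < d)%N && all (fun p => logn p d <= 1)%N (primes d)
  then ((-1) ^+ size (primes d))%R else 0%R.

(* A triple lies on the tree iff it is (a, b, a + b) with 0 < a <= b and
   gcd(a, b) = 1: the two maps preserve this shape, and conversely such a
   triple with a < b is the image of (a, b - a, b) or (b - a, a, b), which is
   smaller.  The triples with largest entry n therefore correspond to the
   integers 1 <= a <= n/2 coprime to n, and these are counted by Moebius
   inversion, since the sum of mu over the divisors of m is [m = 1]. *)
From HB Require Import structures.
From mathcomp Require Import all_boot all_order all_algebra.
From mathcomp Require Import zify.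
Import Order.TTheory GRing.Theory Num.Theory.

Lemma coprimeDl m n : coprime m (m + n) = coprime m n.
Proof. by rewrite /coprime gcdnDl. Qed.

Lemma coprimeDr m n : coprime m (n + m) = coprime m n.
Proof. by rewrite /coprime gcdnDr. Qed.

Definition euclid_shape (t : triple) : bool :=
  let: (a, b, c) := t in [&& c == a + b, 0 < a, a <= b & coprime a b].

Lemma euclid_tree_shape t : on_euclid_tree t -> euclid_shape t.
Proof.
elim=> [|[[a b] c] _ IH|[[a b] c] _ IH] //=;
  move: IH => /and4P[/eqP-> a_gt0 le_ab co_ab]; rewrite eqxx /=.
- by rewrite (leq_trans a_gt0 le_ab) leq_addl coprimeDr coprime_sym.
- by rewrite a_gt0 leq_addr coprimeDl.
Qed.

Lemma euclid_shape_tree t : euclid_shape t -> on_euclid_tree t.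
Proof.
case: t => [[a b] c]; elim: b {-2}b (leqnn b) a c => [|N IH] b le_bN a c /=.
  by move=> /and4P[_ a_gt0 le_ab]; lia.
move=> /and4P[/eqP-> a_gt0 le_ab co_ab].
have [eq_ab|ne_ab] := eqVneq a b.
  by move: co_ab; rewrite -eq_ab /coprime gcdnn => /eqP->; exact: et_root.
have co_a_ba : coprime a (b - a) by rewrite -coprimeDl subnKC.
have [le_a_ba|lt_ba_a] := leqP a (b - a).
- have -> : (a, b, a + b) = Gamma02 (a, b - a, b) by [].
  apply/et_g2/IH; first by lia.
  by rewrite /= subnKC // eqxx a_gt0 le_a_ba co_a_ba.
- have -> : (a, b, a + b) = Gamma01 (b - a, a, b) by [].
  apply/et_g1/IH; first by lia.
  by rewrite /= subnK // eqxx coprime_sym co_a_ba (ltnW lt_ba_a) andbT; lia.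
Qed.

Lemma on_euclid_treeE t : on_euclid_tree t <-> euclid_shape t.
Proof. by split; [exact: euclid_tree_shape | exact: euclid_shape_tree]. Qed.

Definition euclid_triples (n : nat) : seq triple :=
  [seq (a, n - a, n) | a <- [seq a <- iota 1 n./2 | coprime a n]].

Lemma euclid_triples_uniq n : uniq (euclid_triples n).
Proof. by rewrite map_inj_uniq ?filter_uniq ?iota_uniq // => x y []. Qed.

Lemma mem_euclid_triples n t :
  t \in euclid_triples n <-> on_euclid_tree t /\ largest t = n.
Proof.
rewrite on_euclid_treeE; case: t => [[a b] c] /=; split.
  move=> /mapP[x]; rewrite mem_filter mem_iota -divn2 => /andP[co_xn x_range].
  case=> -> -> ->; have le_xn : x <= n by lia.
  rewrite subnKC // eqxx -coprimeDl subnKC // co_xn andbT; split; lia.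
move=> [/and4P[/eqP-> a_gt0 le_ab co_ab] largest_n].
have -> : n = a + b by lia.
apply/mapP; exists a; last by rewrite addKn.
by rewrite mem_filter mem_iota coprimeDl co_ab -divn2 /=; lia.
Qed.

Local Open Scope ring_scope.

Lemma mobius_mul_prime_dvd p d : prime p -> (p %| d)%N -> mobius (p * d) = 0.
Proof.
move=> p_pr p_d; rewrite /mobius.
have [->|d_gt0] := posnP d; first by rewrite muln0.
suff -> : all (fun q => logn q (p * d) <= 1)%N (primes (p * d)) = false.
  by rewrite andbF.
apply/negbTE/allPn; exists p.
  by rewrite mem_primes p_pr muln_gt0 prime_gt0 // d_gt0 dvdn_mulr.
have p_gt0 := prime_gt0 p_pr.
by rewrite lognM // logn_prime // eqxx -ltnNge ltnS lognE p_pr d_gt0 p_d.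
Qed.

Lemma mobius_mul_prime p d :
  prime p -> ~~ (p %| d)%N -> (0 < d)%N -> mobius (p * d) = - mobius d.
Proof.
move=> p_pr p_nd d_gt0; rewrite /mobius; have p_gt0 := prime_gt0 p_pr.
have p_notin : p \notin primes d by rewrite mem_primes (negbTE p_nd) !andbF.
have primes_pd : perm_eq (primes (p * d)) (p :: primes d).
  apply: uniq_perm; rewrite ?primes_uniq //= ?p_notin ?primes_uniq // => q.
  by rewrite primesM // in_cons primes_prime // mem_seq1.
rewrite (perm_size primes_pd) (perm_all _ primes_pd) /= muln_gt0 p_gt0 d_gt0 /=.
rewrite lognM // logn_prime // eqxx lognE (negbTE p_nd) !andbF /=.
rewrite (@eq_in_all _ _ (fun q => logn q d <= 1)%N); last first.
  move=> q; rewrite mem_primes => /and3P[q_pr _ q_d].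
  rewrite lognM // logn_prime //; case: eqP => // eq_qp.
  by rewrite -eq_qp q_d in p_nd.
by case: ifP => _; rewrite ?oppr0 // exprS mulN1r.
Qed.

Lemma divisors_gt0 [n d] : (0 < n)%N -> d \in divisors n -> (0 < d)%N.
Proof. by move=> n_gt0; rewrite -dvdn_divisors // => /dvdn_gt0; apply. Qed.

Lemma sum_mobius_divisors n :
  (0 < n)%N -> \sum_(d <- divisors n) mobius d = (n == 1%N)%:R.
Proof.
move=> n_gt0; have [->|n_ne1] := eqVneq n 1%N; first by rewrite big_seq1.
have n_gt1 : (1 < n)%N by lia.
move: (pdiv n) (pdiv_prime n_gt1) (pdiv_dvd n) => p p_pr /dvdnP[m].
rewrite mulnC => n_eq; rewrite {}n_eq {n_ne1 n_gt1} in n_gt0 *.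
have p_gt0 := prime_gt0 p_pr.
have m_gt0 : (0 < m)%N by move: n_gt0; rewrite muln_gt0 => /andP[].
(* The divisors of p m that are multiples of p are the p d with d | m, and
   those prime to p are the divisors of m prime to p; mu(p d) = - mu(d) for
   the latter and mu(p d) = 0 for the others. *)
have dvd_p : perm_eq [seq d <- divisors (p * m) | (p %| d)%N]
                     [seq (p * d)%N | d <- divisors m].
  apply: uniq_perm.
  - by rewrite filter_uniq ?divisors_uniq.
  - rewrite map_inj_uniq ?divisors_uniq // => x y /eqP.
    by rewrite eqn_pmul2l // => /eqP.
  move=> x; rewrite mem_filter -dvdn_divisors //; apply/andP/mapP.
    move=> [/dvdnP[y ->] y_pm]; exists y; last by rewrite mulnC.
    by rewrite -dvdn_divisors // -(dvdn_pmul2l p_gt0) mulnC.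
  by move=> [y y_m ->]; rewrite dvdn_mulr // dvdn_pmul2l ?dvdn_divisors.
have ndvd_p : perm_eq [seq d <- divisors m | ~~ (p %| d)%N]
                      [seq d <- divisors (p * m) | ~~ (p %| d)%N].
  apply: uniq_perm; rewrite ?filter_uniq ?divisors_uniq // => x.
  rewrite !mem_filter -!dvdn_divisors //; apply/andP/andP => -[p_nx x_d].
    by rewrite dvdn_mull.
  have co_xp : coprime x p by rewrite coprime_sym prime_coprime.
  by rewrite -(Gauss_dvdr m co_xp).
rewrite (bigID (fun d => p %| d)%N) -big_filter (perm_big _ dvd_p) big_map /=.
rewrite (bigID (fun d => p %| d)%N) /= big1 ?add0r; last first.
  by move=> d p_d; rewrite mobius_mul_prime_dvd.
rewrite -[X in _ + X]big_filter -(perm_big _ ndvd_p) big_filter -big_split /=.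
rewrite big_seq_cond big1 // => d /andP[d_m p_nd].
by rewrite mobius_mul_prime ?addNr // (divisors_gt0 m_gt0 d_m).
Qed.

Lemma count_coprime_iota m n : (0 < n)%N ->
  (count (coprime^~ n) (iota 1 m))%:Z =
  \sum_(d <- divisors n) mobius d * (m %/ d)%N%:Z.
Proof.
move=> n_gt0; elim: m => [|m IH].
  by rewrite big1 // => d _; rewrite div0n mulr0.
have -> : iota 1 m.+1 = iota 1 m ++ [:: m.+1] by rewrite -[m.+1]addn1 iotaD add1n addn1.
rewrite count_cat PoszD IH /= addn0.
have gcd_gt0 : (0 < gcdn m.+1 n)%N by rewrite gcdn_gt0.
have dvd_gcd : perm_eq [seq d <- divisors n | (d %| m.+1)%N]
                       (divisors (gcdn m.+1 n)).
  apply: uniq_perm; rewrite ?filter_uniq ?divisors_uniq // => x.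
  by rewrite mem_filter -!dvdn_divisors // dvdn_gcd andbC.
have -> : \sum_(d <- divisors n) mobius d * (m.+1 %/ d)%N%:Z =
   \sum_(d <- divisors n) mobius d * (m %/ d)%N%:Z +
   \sum_(d <- divisors n | (d %| m.+1)%N) mobius d.
  rewrite [X in _ = _ + X]big_mkcond -big_split /= !big_seq.
  apply: eq_bigr => d d_n.
  rewrite divnS ?(divisors_gt0 n_gt0 d_n) // PoszD mulrDr addrC.
  by case: (d %| m.+1)%N; rewrite ?mulr1 ?mulr0.
rewrite -[X in _ = _ + X]big_filter (perm_big _ dvd_gcd).
by rewrite sum_mobius_divisors // /coprime; case: eqP.
Qed.

Theorem corollary3p5 (n : nat) (hn : (0 < n)%N) :
  exists k : nat, E_is n k /\
    k%:Z = \sum_(d <- divisors n) mobius d * ((n %/ (2 * d))%N%:Z + 1).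
Proof.
exists (count (coprime^~ n) (iota 1 n./2) + (n == 1%N))%N; split.
  rewrite /E_is; have [-> //|n_ne1] := eqVneq n 1%N.
  exists (euclid_triples n); split.
  - exact: euclid_triples_uniq.
  - exact: mem_euclid_triples.
  - by rewrite size_map size_filter addn0.
under eq_bigr do rewrite mulrDr mulr1.
rewrite big_split /= sum_mobius_divisors // PoszD count_coprime_iota //.
congr (_ + _); last by case: (n == 1%N).
by apply: eq_bigr => d _; rewrite divnMA divn2.
Qed.
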